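(* Let $r>1$, let $V:\mathbb{R}\to\mathbb{R}$ be convex and $L$-Lipschitz with $V'$ also $L$-Lipschitz, such that $m:=e^{-V}$ is a probability density, and let $\rho=e^{-(r+1)V}$. Let $0<c<C$ and $f\in\mathcal{P}_{c,C}$. Then there exists $\lambda\ge0$ depending only on $c$, $C$ and $V$ such that the $W_2$-Hessian of $\mathcal{F}_\rho[g]=\int\rho\, g^{-r}\,dx$ at $f$ is bounded below by $-\lambda$, i.e. for every smooth compactly supported test function $\phi$, $$2(r+1)\int\frac{\rho'}{f^r}\phi'\phi''\,dx+r(r+1)\int\frac{\rho}{f^r}(\phi'')^2\,dx+\int\frac{\rho''}{f^r}(\phi')^2\,dx\ \ge\ -\lambda\int(\phi')^2 f\,dx.$$
   Context: $\mathcal{P}_{c,C}:=\{g\in\mathcal{P}(\mathbb{R}):\ c\,m\le g\le C\,m\}$. *)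

From HB Require Import structures.
From mathcomp Require Import all_boot all_order all_algebra.
From mathcomp Require Import all_classical all_reals all_analysis.
Set Implicit Arguments. Unset Strict Implicit. Unset Printing Implicit Defensive.
Import Order.TTheory GRing.Theory Num.Theory.
Import numFieldNormedType.Exports.
Local Open Scope classical_set_scope.
Local Open Scope ring_scope.

Definition smooth (R : realType) (phi : R -> R) : Prop :=
  forall (n : nat) (x : R), derivable (iter n (@derive1 R R) phi) x 1.

Definition compact_support (R : realType) (phi : R -> R) : Prop :=
  compact (closure [set x | phi x != 0]).

Definition prob_density (R : realType) (g : R -> R) : Prop :=
  measurable_fun setT g /\ (forall x, 0 <= g x) /\
  (\int[@lebesgue_measure R]_x (g x)%:E = 1)%E.

Definition Pcc (R : realType) (c C : R) (V : R -> R) (g : R -> R) : Prop :=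
  prob_density g /\ forall x, c * expR (- V x) <= g x <= C * expR (- V x).

From HB Require Import structures.
From mathcomp Require Import all_boot all_order all_algebra.
From mathcomp Require Import all_classical all_reals all_analysis.
From mathcomp Require Import ring lra.
From mathcomp Require Import measurable_realfun.
Set Implicit Arguments.
Unset Strict Implicit.
Unset Printing Implicit Defensive.
Import Order.TTheory GRing.Theory Num.Theory.
Import numFieldNormedType.Exports.
Local Open Scope classical_set_scope.
Local Open Scope ring_scope.

(* Put w := rho / f^r.  Since rho' = -(r+1) V' rho with |V'| <= L, the first two
   terms integrate w (r (r+1) phi''^2 - 2 (r+1)^2 V' phi' phi''), and completing
   the square bounds this below by -(r+1)^3 L^2 / r * w phi'^2.  Since V' is
   L-Lipschitz, rho'' = ((r+1)^2 V'^2 - (r+1) V'') rho >= -(r+1) L rho, which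
   bounds the third term below by -(r+1) L * int w phi'^2.  Finally f >= c e^-V
   gives w <= c^-(r+1) f, hence int w phi'^2 <= c^-(r+1) int phi'^2 f. *)

Section lipschitz.
Variables (R : realType) (L : R) (h : R^o -> R^o).
Hypothesis h_lip : L.-lipschitz h.

Lemma lipschitz_ge0 : 0 <= L.
Proof.
have := @h_lip (1, 0) (conj I I) => /=.
by rewrite subr0 normr1 mulr1; apply: le_trans.
Qed.

Lemma lipschitz_continuous : continuous h.
Proof.
move=> x; have L_ge0 := lipschitz_ge0.
have L1_gt0 : 0 < L + 1 by rewrite ltr_pwDr.
apply/cvgrPdist_le => e e_gt0.
have d_gt0 : 0 < e / (L + 1) by rewrite divr_gt0.
have near_x := @cvgr_dist_le _ _ _ (nbhs x) _ id x cvg_id _ d_gt0.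
near=> y.
have xy : `|x - y| <= e / (L + 1) by near: y; exact: near_x.
apply: le_trans (@h_lip (x, y) (conj I I)) _ => /=.
apply: le_trans (ler_wpM2l L_ge0 xy) _.
by rewrite mulrA ler_pdivrMr // mulrC ler_pM2l // lerDl.
Unshelve. all: by end_near. Qed.

Lemma lipschitz_norm_derive1_le x : `|derive1 h x| <= L.
Proof.
have [dh|ndh] := pselect (derivable h x 1); last first.
  by rewrite derive1E /derive dvgP // normr0 lipschitz_ge0.
have quotient_le : \forall t \near (0 : R)^',
    `|t^-1 *: ((h \o shift x) (t *: 1) - h x)| <= L.
  near=> t.
  have t_neq0 : t != 0 by near: t; exact: nbhs_dnbhs_neq.
  have := @h_lip (t *: 1 + x, x) (conj I I) => /=.
  have -> : t *: 1 = t :> R^o by rewrite /GRing.scale /= mulr1.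
  rewrite addrK normrZ normrV ?unitfE // ler_pdivrMl ?normr_gt0 //.
  by rewrite mulrC.
rewrite derive1E /derive ler_norml; apply/andP; split.
- apply: (closed_cvg _ (@closed_ge R^o (- L)) _ _ dh).
  by apply: filterS quotient_le => t; rewrite ler_norml => /andP[].
- apply: (closed_cvg _ (@closed_le R^o L) _ _ dh).
  by apply: filterS quotient_le => t; rewrite ler_norml => /andP[].
Unshelve. all: by end_near. Qed.

End lipschitz.

Lemma derive1_eq0_near (R : realType) (g : R -> R) (x : R) :
  (\forall y \near x, g y = 0) -> derive1 g x = 0.
Proof. by move=> g0; rewrite derive1E (near_eq_derive _ g0) -derive1E derive1_cst. Qed.

Section expR_comp.
Variables (R : realType) (k : R) (V : R^o -> R^o).
Hypothesis V_derivable : forall x : R, derivable V x 1.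

Lemma is_derive_expR_comp (x : R) :
  is_derive x 1 (fun y : R => expR (k * V y)) (k * derive1 V x * expR (k * V x)).
Proof.
have dV : is_derive x (1 : R) V (derive1 V x).
  by rewrite derive1E; exact: derivableP.
have dkV : is_derive x (1 : R) (fun y : R => k * V y) (k * derive1 V x).
  exact: is_deriveZ.
have := is_derive1_comp (is_derive_expR _) dkV.
by move=> dE; apply: (is_derive_eq dE) => /=; rewrite mulrC.
Qed.

Lemma continuous_expR_comp : continuous (fun y : R => expR (k * V y)).
Proof.
move=> x; apply/differentiable_continuous/derivable1_diffP.
exact/ex_derive/is_derive_expR_comp.
Qed.

Lemma derive1_expR_comp :
  derive1 (fun y : R => expR (k * V y)) =
  (fun x => k * derive1 V x * expR (k * V x)).
Proof.
by apply/funext => x; rewrite derive1E; apply: derive_val; exact: is_derive_expR_comp.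
Qed.

Lemma derive2_expR_comp (x : R) : derivable (derive1 V : R^o -> R^o) x 1 ->
  derive1 (derive1 (fun y : R => expR (k * V y))) x =
  ((k * derive1 V x) ^+ 2 + k * derive1 (derive1 V : R^o -> R^o) x)
    * expR (k * V x).
Proof.
move=> dV'; rewrite derive1_expR_comp derive1E.
have kV' := is_deriveZ k (derivableP dV').
have dW := is_deriveM kV' (is_derive_expR_comp x).
rewrite (@derive_val _ _ _ _ _ _ _ dW) -derive1E /=.
by rewrite /GRing.scale /=; ring.
Qed.

Lemma derivable_derive1_expR_comp (x : R) : k != 0 ->
  derivable (derive1 (fun y : R => expR (k * V y))) x 1 ->
  derivable (derive1 V : R^o -> R^o) x 1.
Proof.
move=> k_neq0; rewrite derive1_expR_comp => dW.
pose g := k \*: (fun y : R => expR (k * V y)).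
have g_neq0 y : g y != 0.
  by apply: mulf_neq0 => //; exact/lt0r_neq0/expR_gt0.
have dg : derivable g x 1 by exact/derivableZ/ex_derive/is_derive_expR_comp.
suff -> : (derive1 V : R^o -> R^o) =
    (fun y => k * derive1 V y * expR (k * V y)) * (fun y => (g y)^-1).
  exact: derivableM dW (derivableV (g_neq0 x) dg).
apply/funext => y; apply: (mulIf (g_neq0 y)).
by rewrite /= divfK // /g /= /GRing.scale /=; ring.
Qed.

Lemma derive2_expR_comp_ge (L : R) : k < 0 ->
  L.-lipschitz (derive1 V : R^o -> R^o) -> forall x : R,
  k * L * expR (k * V x) <= derive1 (derive1 (fun y : R => expR (k * V y))) x.
Proof.
move=> k_lt0 V'_lip x; have L_ge0 := lipschitz_ge0 V'_lip.
have E_gt0 := expR_gt0 (k * V x).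
have [dW|ndW] := pselect (derivable (derive1 (fun y : R => expR (k * V y))) x 1).
  have dV' := derivable_derive1_expR_comp (ltr0_neq0 k_lt0) dW.
  rewrite (derive2_expR_comp dV').
  rewrite ler_pM2r // -[X in X <= _]add0r lerD ?sqr_ge0 // ler_nM2l //.
  by have := lipschitz_norm_derive1_le V'_lip x; rewrite ler_norml => /andP[].
(* where the first derivative is not differentiable, [derive1] returns 0 *)
rewrite derive1E /derive dvgP //.
exact: mulr_le0_ge0 (mulr_le0_ge0 (ltW k_lt0) L_ge0) (ltW E_gt0).
Qed.

End expR_comp.

Section smooth_compact_support.
Variables (R : realType) (phi : R -> R).

Lemma iter_derive1_eq0_outside_support n x :
  ~ closure [set y | phi y != 0] x -> iter n (@derive1 R R) phi x = 0.
Proof.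
elim: n x => [|n IHn] x x_out /=.
  by apply/eqP; apply: contra_notT x_out => phi_x; exact: subset_closure.
apply: derive1_eq0_near.
have : open (~` closure [set y | phi y != 0]) by exact/closed_openC/closed_closure.
by rewrite openE => /(_ x x_out); apply: filterS => y /IHn.
Qed.

Hypothesis phi_smooth : smooth phi.

Lemma continuous_iter_derive1 n : continuous (iter n (@derive1 R R) phi).
Proof.
by move=> x; apply/differentiable_continuous/derivable1_diffP; exact: phi_smooth.
Qed.

Hypothesis phi_supp : compact_support phi.

Lemma bounded_iter_derive1 n :
  exists M, forall x, `|iter n (@derive1 R R) phi x| <= M.
Proof.
have /compact_bounded[M [_ M_bound]] :=
  continuous_compact (continuous_subspaceT (@continuous_iter_derive1 n)) phi_supp.
exists (`|M| + 1) => x; have [Kx|Kx] := pselect (closure [set y | phi y != 0] x).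
  by apply: M_bound; [rewrite (le_lt_trans (ler_norm M)) ?ltrDl | exists x].
by rewrite iter_derive1_eq0_outside_support // normr0 addr_ge0.
Qed.

End smooth_compact_support.

Section lebesgue_integrals.
Variable R : realType.
Local Notation mu := (@lebesgue_measure R).

(* Unlike [ge0_le_integral], no measurability is assumed. *)
Lemma ge0_le_integralT (f1 f2 : R -> \bar R) :
  (forall x, 0 <= f1 x)%E -> (forall x, f1 x <= f2 x)%E ->
  (\int[mu]_x f1 x <= \int[mu]_x f2 x)%E.
Proof.
move=> f1_ge0 f12.
have f2_ge0 x : (0 <= f2 x)%E by exact: le_trans (f1_ge0 x) (f12 x).
rewrite !ge0_integralTE //=.
apply: ge_ereal_sup => _ [h /= h_le <-]; apply: ereal_sup_ubound.
by exists h => //= x; exact: le_trans (h_le x) (f12 x).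
Qed.

(* [g] need not be integrable: if its positive part has infinite integral,
   then [\int[mu]_x g x] is [fine +oo = 0]. *)
Lemma Rintegral_ge_opp (g h : R -> R) :
  mu.-integrable setT (EFin \o h) -> (forall x, 0 <= h x) ->
  (forall x, - h x <= g x) -> - (\int[mu]_x h x) <= \int[mu]_x g x.
Proof.
move=> h_int h_ge0 hg.
have h_fin := integrable_fin_num measurableT h_int.
rewrite /Rintegral [in leRHS]integralE.
have pos_ge0 : (0 <= \int[mu]_x (EFin \o g)^\+ x)%E.
  by apply: integral_ge0 => x _; exact: funepos_ge0.
have neg_ge0 : (0 <= \int[mu]_x (EFin \o g)^\- x)%E.
  by apply: integral_ge0 => x _; exact: funeneg_ge0.
have neg_le : (\int[mu]_x (EFin \o g)^\- x <= \int[mu]_x (h x)%:E)%E.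
  apply: ge0_le_integralT => x; first exact: funeneg_ge0.
  by rewrite funenegE ge_max /= !lee_fin h_ge0 andbT lerNl.
move: pos_ge0 neg_ge0 neg_le h_fin.
case: (\int[mu]_x (h x)%:E)%E => [H| |] //.
case: (\int[mu]_x (EFin \o g)^\- x)%E => [N| |] //.
by case: (\int[mu]_x (EFin \o g)^\+ x)%E => [P| |] //=; rewrite !lee_fin; lra.
Qed.

Lemma prob_density_integrable (f : R -> R) :
  prob_density f -> mu.-integrable setT (EFin \o f).
Proof.
move=> [f_meas [f_ge0 f_int1]]; apply/integrableP; split.
  exact/measurable_EFinP.
rewrite (eq_integral (fun x : measurableTypeR R => (f x)%:E)) ?f_int1 ?ltry //.
by move=> x _; rewrite /comp abse_EFin ger0_norm.
Qed.

Lemma integrable_le_scale (g f : R -> R) (M : R) :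
  measurable_fun setT g -> mu.-integrable setT (EFin \o f) ->
  (forall x, `|g x| <= M * f x) -> mu.-integrable setT (EFin \o g).
Proof.
move=> g_meas f_int g_le.
have Eg_meas : measurable_fun (setT : set (measurableTypeR R)) (EFin \o g).
  exact/measurable_EFinP.
apply: (le_integrable measurableT Eg_meas _ (integrableZl measurableT M f_int)).
move=> x _; rewrite /comp -EFinM !abse_EFin lee_fin.
exact: le_trans (g_le x) (ler_norm _).
Qed.

Lemma integrableZl_EFin (k : R) (g : R -> R) :
  mu.-integrable setT (EFin \o g) ->
  mu.-integrable setT (EFin \o (fun x => k * g x)).
Proof.
by move=> g_int; apply: eq_integrable (integrableZl measurableT k g_int).
Qed.

Lemma integrableD_EFin (g h : R -> R) :
  mu.-integrable setT (EFin \o g) -> mu.-integrable setT (EFin \o h) ->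
  mu.-integrable setT (EFin \o (fun x => g x + h x)).
Proof.
by move=> g_int h_int; apply: eq_integrable (integrableD measurableT g_int h_int).
Qed.

End lebesgue_integrals.

Lemma normrM_le (R : numDomainType) (x y X Y : R) :
  `|x| <= X -> `|y| <= Y -> `|x * y| <= X * Y.
Proof. by move=> x_le y_le; rewrite normrM ler_pM. Qed.

Lemma cross_term_ge (R : realFieldType) (r B b u v : R) :
  0 < r -> `|b| <= B ->
  - (B ^+ 2 / r * u ^+ 2) <= 2 * (b * u * v) + r * v ^+ 2.
Proof.
move=> r_gt0; rewrite ler_norml => /andP[Bb bB].
have gap_ge0 : 0 <= (B ^+ 2 - b ^+ 2) * u ^+ 2 by rewrite mulr_ge0 ?sqr_ge0 //; nra.
rewrite -subr_ge0 -(pmulr_rge0 _ r_gt0).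
have -> : r * (2 * (b * u * v) + r * v ^+ 2 - - (B ^+ 2 / r * u ^+ 2)) =
    (r * v + b * u) ^+ 2 + (B ^+ 2 - b ^+ 2) * u ^+ 2.
  by field; rewrite lt0r_neq0.
by rewrite addr_ge0 ?sqr_ge0.
Qed.

Lemma expR_div_powR_le (R : realType) (r c v y : R) :
  0 <= r -> 0 < c -> c * expR (- v) <= y ->
  expR (- ((r + 1) * v)) / y `^ r <= c `^ (- (r + 1)) * y.
Proof.
move=> r_ge0 c_gt0 y_ge.
have y_gt0 : 0 < y by apply: lt_le_trans y_ge; rewrite mulr_gt0 ?expR_gt0.
have ln_y_ge : ln c - v <= ln y.
  move: y_ge; rewrite -ler_ln ?posrE ?mulr_gt0 ?expR_gt0 //.
  by rewrite lnM ?posrE ?expR_gt0 // expRK.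
rewrite /powR !gt_eqF // -expRB -[in leRHS](lnK y_gt0) -expRD ler_expR.
nra.
Qed.

Section weighted_integrals.
Variables (R : realType) (f w : R -> R) (kap : R).
Local Notation mu := (@lebesgue_measure R).
Hypothesis f_int : mu.-integrable setT (EFin \o f).
Hypothesis f_ge0 : forall x, 0 <= f x.
Hypothesis w_meas : measurable_fun setT w.
Hypothesis w_bound : forall x, 0 <= w x <= kap * f x.

Lemma integrable_weighted (s : R -> R) (S : R) :
  measurable_fun setT s -> (forall x, `|s x| <= S) ->
  mu.-integrable setT (EFin \o (fun x => w x * s x)).
Proof.
move=> s_meas s_le; apply: (@integrable_le_scale _ _ f (kap * S) _ f_int).
  exact: measurable_funM.
move=> x; have /andP[w_ge0 w_le] := w_bound x.
by rewrite mulrAC normrM (ger0_norm w_ge0) ler_pM // (le_trans _ (s_le x)).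
Qed.

Lemma weighted_Rintegral_le (s : R -> R) (S : R) :
  measurable_fun setT s -> (forall x, 0 <= s x <= S) ->
  \int[mu]_x (w x * s x) <= kap * \int[mu]_x (s x * f x).
Proof.
move=> s_meas s_bound.
have s_le x : `|s x| <= S by have /andP[s_ge0 s_le] := s_bound x; rewrite ger0_norm.
have sf_int : mu.-integrable setT (EFin \o (fun x => s x * f x)).
  have f_meas : measurable_fun setT f.
    by apply/measurable_EFinP; exact: (@measurable_int _ _ _ _ _ _ f_int).
  apply: (@integrable_le_scale _ _ f S _ f_int); first exact: measurable_funM.
  by move=> x; rewrite normrM (ger0_norm (f_ge0 x)) ler_wpM2r.
rewrite -RintegralZl //; apply: le_Rintegral => //.
- exact: integrable_weighted s_meas s_le.
- exact: integrableZl_EFin.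
move=> x _; have /andP[_ w_le] := w_bound x; have /andP[s_ge0 _] := s_bound x.
by rewrite mulrCA mulrC ler_wpM2l.
Qed.

Lemma weighted_cross_term_ge (r B Bu Bv : R) (b u v : R -> R) : 0 < r ->
  measurable_fun setT b -> measurable_fun setT u -> measurable_fun setT v ->
  (forall x, `|b x| <= B) -> (forall x, `|u x| <= Bu) -> (forall x, `|v x| <= Bv) ->
  - (B ^+ 2 / r * \int[mu]_x (w x * u x ^+ 2)) <=
  2 * \int[mu]_x (w x * (b x * u x * v x)) + r * \int[mu]_x (w x * v x ^+ 2).
Proof.
move=> r_gt0 b_meas u_meas v_meas b_le u_le v_le.
have sqr_meas (s : R -> R) : measurable_fun setT s ->
    measurable_fun setT (fun x => s x ^+ 2).
  by move=> s_meas; under eq_fun do rewrite expr2; exact: measurable_funM.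
have sqr_le (s : R -> R) S : (forall x, `|s x| <= S) -> forall x, `|s x ^+ 2| <= S * S.
  by move=> s_le x; rewrite expr2 normrM_le.
have buv_int := integrable_weighted
  (measurable_funM (measurable_funM b_meas u_meas) v_meas)
  (fun x => normrM_le (normrM_le (b_le x) (u_le x)) (v_le x)).
have uu_int := integrable_weighted (sqr_meas u u_meas) (sqr_le u Bu u_le).
have vv_int := integrable_weighted (sqr_meas v v_meas) (sqr_le v Bv v_le).
rewrite -!RintegralZl // -subr_ge0 opprK -RintegralD ?integrableZl_EFin //.
rewrite -RintegralD ?integrableD_EFin ?integrableZl_EFin //.
apply: Rintegral_ge0 => x _; have /andP[w_ge0 _] := w_bound x.
have := ler_wpM2l w_ge0 (cross_term_ge (u x) (v x) r_gt0 (b_le x)).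
rewrite mulrN -subr_ge0 opprK.
by congr (0 <= _); ring.
Qed.

End weighted_integrals.

Definition hessian_weight (R : realType) (r : R) (V f : R -> R) (x : R) : R :=
  expR (- ((r + 1) * V x)) / f x `^ r.

Definition hessian_rate (R : numFieldType) (r L : R) : R :=
  (r + 1) ^+ 3 * L ^+ 2 / r + (r + 1) * L.

Lemma hessian_rate_ge0 (R : numFieldType) (r L : R) :
  0 < r -> 0 <= L -> 0 <= hessian_rate r L.
Proof.
move=> r_gt0 L_ge0; have r1_ge0 : 0 <= r + 1 by rewrite addr_ge0 ?ltW.
by rewrite addr_ge0 ?mulr_ge0 ?exprn_ge0 // invr_ge0 ltW.
Qed.

Section hessian_lower_bound.
Variables (R : realType) (r L c : R) (V : R^o -> R^o) (f phi : R -> R).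
Hypothesis r_gt0 : 0 < r.
Hypothesis V_derivable : forall x : R, derivable V x 1.
Hypothesis V_lip : L.-lipschitz V.
Hypothesis V'_lip : L.-lipschitz (derive1 V : R^o -> R^o).
Hypothesis c_gt0 : 0 < c.
Hypothesis f_pdf : prob_density f.
Hypothesis f_ge : forall x, c * expR (- V x) <= f x.
Hypothesis phi_smooth : smooth phi.
Hypothesis phi_supp : compact_support phi.

Local Notation mu := (@lebesgue_measure R).
Local Notation rho := (fun x : R => expR (- ((r + 1) * V x))).
Local Notation w := (hessian_weight r V f).

Let r1_gt0 : 0 < r + 1. Proof. by rewrite addr_gt0. Qed.

Let rhoE : rho = (fun x => expR (- (r + 1) * V x)).
Proof. by apply/funext => x; rewrite mulNr. Qed.

Let f_int : mu.-integrable setT (EFin \o f). Proof. exact: prob_density_integrable. Qed.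

Let f_ge0 x : 0 <= f x. Proof. by case: f_pdf => _ []. Qed.

Let phi_meas n : measurable_fun setT (iter n (@derive1 R R) phi).
Proof. exact: continuous_measurable_fun (continuous_iter_derive1 phi_smooth (n := n)). Qed.

Let phi1_sq_meas : measurable_fun setT (fun x => derive1 phi x ^+ 2).
Proof. by under eq_fun do rewrite expr2; exact: measurable_funM (phi_meas 1) (phi_meas 1). Qed.

Let phi1_sq_bounded : exists M, forall x, 0 <= derive1 phi x ^+ 2 <= M.
Proof.
have [M phi1_le] := bounded_iter_derive1 phi_smooth phi_supp 1.
exists (M * M) => x; rewrite sqr_ge0 /= expr2.
exact: le_trans (ler_norm _) (normrM_le (phi1_le x) (phi1_le x)).
Qed.

Lemma hessian_weight_bound x : 0 <= w x <= c `^ (- (r + 1)) * f x.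
Proof.
rewrite /hessian_weight divr_ge0 ?powR_ge0 ?expR_ge0 //=.
exact: expR_div_powR_le (ltW r_gt0) c_gt0 (f_ge x).
Qed.

Lemma measurable_hessian_weight : measurable_fun setT w.
Proof.
apply: measurable_funM.
  by apply: continuous_measurable_fun; rewrite rhoE; exact: continuous_expR_comp.
have f_meas : measurable_fun setT f by case: f_pdf.
under eq_fun do rewrite -powRN.
exact: measurableT_comp (measurable_powR _) f_meas.
Qed.

Lemma hessian_cross_terms_ge :
  - ((r + 1) ^+ 3 * L ^+ 2 / r * \int[mu]_x (w x * derive1 phi x ^+ 2)) <=
  2 * (r + 1) *
    \int[mu]_x (derive1 rho x / f x `^ r * derive1 phi x * derive1n 2 phi x)
  + r * (r + 1) * \int[mu]_x (w x * derive1n 2 phi x ^+ 2).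
Proof.
pose b x := - (r + 1) * derive1 V x.
have b_meas : measurable_fun setT b.
  apply: measurable_funM; first exact: measurable_cst.
  exact: continuous_measurable_fun (lipschitz_continuous V'_lip).
have b_le x : `|b x| <= (r + 1) * L.
  rewrite /b normrM normrN (gtr0_norm r1_gt0) ler_pM2l //.
  exact: lipschitz_norm_derive1_le V_lip x.
have [M1 phi1_le] := bounded_iter_derive1 phi_smooth phi_supp 1.
have [M2 phi2_le] := bounded_iter_derive1 phi_smooth phi_supp 2.
have := weighted_cross_term_ge f_int measurable_hessian_weight hessian_weight_bound
  (u := derive1 phi) (v := derive1n 2 phi) r_gt0 b_meas (phi_meas 1) (phi_meas 2)
  b_le phi1_le phi2_le.
have -> : (fun x => derive1 rho x / f x `^ r * derive1 phi x * derive1n 2 phi x) =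
    (fun x => w x * (b x * derive1 phi x * derive1n 2 phi x)).
  apply/funext => x; rewrite /hessian_weight /b rhoE.
  by rewrite (derive1_expR_comp _ V_derivable) /= !mulNr; ring.
move=> /(ler_wpM2l (ltW r1_gt0)).
set Iw := Rintegral _ _ _; set I1 := Rintegral _ _ _; set I2 := Rintegral _ _ _.
lra.
Qed.

Lemma hessian_third_term_ge :
  - ((r + 1) * L * \int[mu]_x (w x * derive1 phi x ^+ 2)) <=
  \int[mu]_x (derive1n 2 rho x / f x `^ r * derive1 phi x ^+ 2).
Proof.
have [M phi1_sq_bound] := phi1_sq_bounded.
have phi1_sq_le x : `|derive1 phi x ^+ 2| <= M.
  by have /andP[sq_ge0 sq_le] := phi1_sq_bound x; rewrite ger0_norm.
have w_int := integrable_weighted f_int measurable_hessian_weight hessian_weight_bound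
  phi1_sq_meas phi1_sq_le.
have L_ge0 := lipschitz_ge0 V'_lip.
rewrite -RintegralZl //; apply: Rintegral_ge_opp; first exact: integrableZl_EFin.
  move=> x; have /andP[w_ge0 _] := hessian_weight_bound x.
  exact: mulr_ge0 (mulr_ge0 (ltW r1_gt0) L_ge0) (mulr_ge0 w_ge0 (sqr_ge0 _)).
move=> x; pose q := (f x `^ r)^-1 * derive1 phi x ^+ 2.
have q_ge0 : 0 <= q by rewrite mulr_ge0 ?invr_ge0 ?powR_ge0 ?sqr_ge0.
have k_lt0 : - (r + 1) < 0 by rewrite oppr_lt0.
have := ler_wpM2r q_ge0 (derive2_expR_comp_ge V_derivable k_lt0 V'_lip x).
have -> : - ((r + 1) * L * (w x * derive1 phi x ^+ 2)) =
    - (r + 1) * L * expR (- (r + 1) * V x) * q.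
  by rewrite /hessian_weight /q !mulNr; ring.
by move/le_trans; apply; rewrite rhoE -mulrA.
Qed.

Lemma hessian_weight_energy_le :
  \int[mu]_x (w x * derive1 phi x ^+ 2) <=
  c `^ (- (r + 1)) * \int[mu]_x (derive1 phi x ^+ 2 * f x).
Proof.
have [M phi1_sq_bound] := phi1_sq_bounded.
by have := weighted_Rintegral_le f_int f_ge0 measurable_hessian_weight
  hessian_weight_bound phi1_sq_meas phi1_sq_bound.
Qed.

Lemma hessian_lower_bound :
  - (hessian_rate r L * c `^ (- (r + 1))) * \int[mu]_x (derive1 phi x ^+ 2 * f x) <=
  2 * (r + 1) *
    \int[mu]_x (derive1 rho x / f x `^ r * derive1 phi x * derive1n 2 phi x)
  + r * (r + 1) * \int[mu]_x (w x * derive1n 2 phi x ^+ 2)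
  + \int[mu]_x (derive1n 2 rho x / f x `^ r * derive1 phi x ^+ 2).
Proof.
have K_ge0 := hessian_rate_ge0 r_gt0 (lipschitz_ge0 V'_lip).
move: hessian_cross_terms_ge hessian_third_term_ge
  (ler_wpM2l K_ge0 hessian_weight_energy_le).
rewrite /hessian_rate.
(* naming the integrals keeps [lra] from comparing them up to conversion *)
set IE := \int[mu]_x (derive1 phi x ^+ 2 * f x).
set Iw := \int[mu]_x (w x * derive1 phi x ^+ 2).
set I1 := \int[mu]_x (derive1 rho x / f x `^ r * derive1 phi x * derive1n 2 phi x).
set I2 := \int[mu]_x (w x * derive1n 2 phi x ^+ 2).
set I3 := \int[mu]_x (derive1n 2 rho x / f x `^ r * derive1 phi x ^+ 2).
lra.
Qed.

End hessian_lower_bound.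

Theorem proposition2p4 (R : realType) (r L c C : R) (V : R^o -> R^o) :
  1 < r ->
  convex_function setT V ->
  L.-lipschitz V ->
  (forall x : R, derivable V x 1) ->
  L.-lipschitz (derive1 V : R^o -> R^o) ->
  (\int[@lebesgue_measure R]_x (expR (- V x))%:E = 1)%E ->
  0 < c -> c < C ->
  let rho : R -> R := fun x => expR (- ((r + 1) * V x)) in
  exists lambda : R, 0 <= lambda /\
    forall f : R -> R, Pcc c C V f ->
    forall phi : R -> R, smooth phi -> compact_support phi ->
      2 * (r + 1) * Rintegral (@lebesgue_measure R) setT
          (fun x => derive1 rho x / (f x `^ r) * derive1 phi x * derive1n 2 phi x)
      + r * (r + 1) * Rintegral (@lebesgue_measure R) setT
          (fun x => rho x / (f x `^ r) * (derive1n 2 phi x) ^+ 2)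
      + Rintegral (@lebesgue_measure R) setT
          (fun x => derive1n 2 rho x / (f x `^ r) * (derive1 phi x) ^+ 2)
      >= - lambda * Rintegral (@lebesgue_measure R) setT
          (fun x => (derive1 phi x) ^+ 2 * f x).
Proof.
move=> r_gt1 _ V_lip V_derivable V'_lip _ c_gt0 _ rho.
have r_gt0 : 0 < r by lra.
exists (hessian_rate r L * c `^ (- (r + 1))); split.
  by rewrite mulr_ge0 ?powR_ge0 ?hessian_rate_ge0 ?(lipschitz_ge0 V'_lip).
move=> f [f_pdf f_bound] phi phi_smooth phi_supp.
have f_ge x : c * expR (- V x) <= f x by case/andP: (f_bound x).
exact: hessian_lower_bound.
Qed.
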